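(* Let $\mathfrak{g}$ be a $\mathrm{Lie}$-nilpotent Leibniz algebra of class $k\ge2$ and let $0\to\mathfrak{r}\to\mathfrak{f}\to\mathfrak{g}\to0$ be a free presentation of $\mathfrak{g}$. Then there is a natural exact sequence $$0\to\frac{\mathfrak{f}^{[k+1]}}{[\mathfrak{f},\mathfrak{r}]_{\mathrm{Lie}}\cap\mathfrak{f}^{[k+1]}}\to\mathcal{M}^{\mathrm{Lie}}(\mathfrak{g})\to\mathcal{M}^{\mathrm{Lie}}\big(\mathfrak{g}/\mathfrak{g}^{[k]}\big)\to\mathfrak{g}^{[k]}\to0.$$
   Context: Fix a field $\mathbb{K}$ with $\frac12\in\mathbb{K}$. A Leibniz algebra is a $\mathbb{K}$-vector space with a bilinear bracket satisfying $[x,[y,z]]=[[x,y],z]-[[x,z],y]$. For two-sided ideals $\mathfrak{m},\mathfrak{n}$, $[\mathfrak{m},\mathfrak{n}]_{\mathrm{Lie}}$ is the subspace spanned by all $[m,n]+[n,m]$. The lower $\mathrm{Lie}$-central series of a Leibniz algebra $\mathfrak{h}$ is $\mathfrak{h}^{[1]}=\mathfrak{h}$, $\mathfrak{h}^{[i]}=[\mathfrak{h}^{[i-1]},\mathfrak{h}]_{\mathrm{Lie}}$; $\mathfrak{h}$ is $\mathrm{Lie}$-nilpotent of class $k$ if $\mathfrak{h}^{[k+1]}=0$ and $\mathfrak{h}^{[k]}\neq0$. A free presentation is $0\to\mathfrak{r}\to\mathfrak{f}\to\mathfrak{g}\to0$ with $\mathfrak{f}$ free Leibniz. The Schur $\mathrm{Lie}$-multiplier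 is $\mathcal{M}^{\mathrm{Lie}}(\mathfrak{g})=\frac{\mathfrak{r}\cap[\mathfrak{f},\mathfrak{f}]_{\mathrm{Lie}}}{[\mathfrak{f},\mathfrak{r}]_{\mathrm{Lie}}}$, independent of the presentation up to isomorphism. *)

From HB Require Import structures.
From mathcomp Require Import all_boot all_order all_algebra.
Set Implicit Arguments. Unset Strict Implicit. Unset Printing Implicit Defensive.
Import GRing.Theory.
Local Open Scope ring_scope.

Record leibniz (K : fieldType) := Leibniz {
  lcarrier :> lmodType K;
  lbr : lcarrier -> lcarrier -> lcarrier;
  lbr_linl : forall (a : K) (x y z : lcarrier),
      lbr (a *: x + y) z = a *: lbr x z + lbr y z;
  lbr_linr : forall (a : K) (x y z : lcarrier),
      lbr z (a *: x + y) = a *: lbr z x + lbr z y;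
  lbr_leibniz : forall x y z : lcarrier,
      lbr x (lbr y z) = lbr (lbr x y) z - lbr (lbr x z) y }.
Arguments lbr {K} l _ _.

Section Defs.
Variable K : fieldType.

Definition setAll (V : Type) : V -> Prop := fun _ => True.
Arguments setAll V _ : clear implicits.

Definition span (V : lmodType K) (S : V -> Prop) : V -> Prop :=
  fun x => exists (n : nat) (c : 'I_n -> K) (v : 'I_n -> V),
      (forall i, S (v i)) /\ x = \sum_(i < n) c i *: v i.

Definition lie_br (h : leibniz K) (m n : h -> Prop) : h -> Prop :=
  span (fun x => exists a b, m a /\ n b /\ x = lbr h a b + lbr h b a).

(* lower Lie-central series: lowlie h i = h^{[i]} for i >= 1
   (h^{[1]} = h, h^{[i]} = [h^{[i-1]}, h]_Lie); lowlie h 0 := h by convention *)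
Unset Implicit Arguments.
Fixpoint lowlie (h : leibniz K) (i : nat) : h -> Prop :=
  match i with
  | 0 => setAll h
  | i'.+1 => match i' with
             | 0 => setAll h
             | _ => lie_br (lowlie h i') (setAll h)
             end
  end.
Set Implicit Arguments.

Definition lie_nilpotent_class (h : leibniz K) (k : nat) : Prop :=
  (forall x, lowlie h k.+1 x -> x = 0) /\ (exists x, lowlie h k x /\ x <> 0).

Definition is_hom (h1 h2 : leibniz K) (phi : h1 -> h2) : Prop :=
  (forall (a : K) (x y : h1), phi (a *: x + y) = a *: phi x + phi y) /\
  (forall x y : h1, phi (lbr h1 x y) = lbr h2 (phi x) (phi y)).

Definition is_free (f : leibniz K) : Prop :=
  exists (X : Type) (iota : X -> f),
    forall (h : leibniz K) (t : X -> h),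
      (exists phi : f -> h, is_hom phi /\ forall x, phi (iota x) = t x) /\
      (forall phi psi : f -> h, is_hom phi -> is_hom psi ->
         (forall x, phi (iota x) = t x) -> (forall x, psi (iota x) = t x) ->
         forall y, phi y = psi y).

Definition kernel (V W : lmodType K) (p : V -> W) : V -> Prop :=
  fun x => p x = 0.

(* (Q, pi) is a model of the quotient space U / W (U, W subspaces of V):
   pi : V -> Q is linear, maps U onto Q, and its kernel on U is exactly W. *)
Definition quotient_model (V : lmodType K) (U W : V -> Prop)
    (Q : lmodType K) (pi : V -> Q) : Prop :=
  [/\ forall (a : K) (x y : V), pi (a *: x + y) = a *: pi x + pi y,
      forall q : Q, exists2 u, U u & pi u = q
    & forall u, U u -> (pi u = 0 <-> W u)].

(* Schur Lie-multiplier for the presentation with free algebra f and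
   kernel r:  (r cap [f,f]_Lie) / [f,r]_Lie *)
Definition schur_num (f : leibniz K) (r : f -> Prop) : f -> Prop :=
  fun x => r x /\ lie_br (setAll f) (setAll f) x.
Definition schur_den (f : leibniz K) (r : f -> Prop) : f -> Prop :=
  lie_br (setAll f) r.
Definition schur_model (f : leibniz K) (r : f -> Prop)
    (Q : lmodType K) (pi : f -> Q) : Prop :=
  quotient_model (schur_num r) (schur_den r) pi.

End Defs.
Arguments lowlie {K} h i _.
Arguments setAll V _ : clear implicits.

From Pilot Require Import Defs.
From HB Require Import structures.
From mathcomp Require Import all_boot all_order all_algebra.
From Stdlib Require Import ClassicalEpsilon.
Set Implicit Arguments. Unset Strict Implicit. Unset Printing Implicit Defensive.
Import GRing.Theory.
Local Open Scope ring_scope.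

(** The four maps are induced, by the identity of f and by p, between subquotients
    of f: Q1 = U1/W1, Q2 = U2/W2, Q3 = U3/W3 with U1 = f^[k+1], U2 = r ∩ [f,f],
    W2 = [f,r], U3 = s ∩ [f,f], W3 = [f,s], where s = p^-1(g^[k]).  Such a sequence
    U1/W1 -> U2/W2 -> U3/W3 -> X is exact as soon as W1 = U1 ∩ W2, U1 ⊆ W3,
    U2 ∩ W3 ⊆ U1 + W2 and U3 ∩ ker h = U2.  Nilpotency of g gives f^[k+1] ⊆ r and
    [f,s] ⊆ r; lifting g^[k] to f^[k] along the surjection p gives
    [f,s] = f^[k+1] + [f,r] and p(s ∩ [f,f]) = g^[k], the latter because
    f^[k] ⊆ [f,f] for k >= 2. *)

Section Subspaces.
Variables (K : fieldType) (V : lmodType K).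
Implicit Types (S U : V -> Prop) (x y : V).

Definition subspace U := U 0 /\ forall a x y, U x -> U y -> U (a *: x + y).

Lemma subspaceB U : subspace U -> forall x y, U x -> U y -> U (x - y).
Proof. by move=> [_ UZ] x y Ux Uy; rewrite addrC -scaleN1r; apply: UZ. Qed.

Lemma subspaceI U U' : subspace U -> subspace U' -> subspace (fun x => U x /\ U' x).
Proof.
move=> [U0 UZ] [U'0 U'Z]; split=> // a x y [? ?] [? ?].
by split; [apply: UZ | apply: U'Z].
Qed.

Lemma span_ind S (P : V -> Prop) :
  P 0 -> (forall a v x, S v -> P x -> P (a *: v + x)) ->
  forall x, Defs.span S x -> P x.
Proof.
move=> P0 PS x [n [c [v [Sv ->]]]].
elim: n c v Sv => [|n IHn] c v Sv; first by rewrite big_ord0.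
rewrite big_ord_recr /= addrC; apply: PS => //.
exact: (IHn (fun i => c (widen_ord (leqnSn n) i)) (fun i => v (widen_ord (leqnSn n) i))).
Qed.

Lemma span0 S : Defs.span S 0.
Proof. by exists 0%N, (fun _ => 0), (fun _ => 0); rewrite big_ord0; split=> [[]|]. Qed.

Lemma span_cons S a v x : S v -> Defs.span S x -> Defs.span S (a *: v + x).
Proof.
move=> Sv [n [c [w [Sw ->]]]].
exists n.+1, (fun i => if unlift ord0 i is Some j then c j else a),
  (fun i => if unlift ord0 i is Some j then w j else v); split.
  by move=> i; case: (unlift ord0 i).
by rewrite big_ord_recl unlift_none; congr (_ + _); apply: eq_bigr => i _; rewrite liftK.
Qed.

Lemma span_mem S x : S x -> Defs.span S x.
Proof. by move=> Sx; rewrite -[x]addr0 -[x]scale1r; apply: span_cons; last exact: span0. Qed.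

Lemma subspace_span S : subspace (Defs.span S).
Proof.
split=> [|a x y]; first exact: span0.
move=> Sx; move: x Sx y; apply: span_ind => [y|b v x Sv IH y Sy].
  by rewrite scaler0 add0r.
by rewrite scalerDr scalerA -addrA; apply: span_cons => //; apply: IH.
Qed.

Lemma span_sub S U : subspace U -> (forall x, S x -> U x) -> forall x, Defs.span S x -> U x.
Proof. by move=> [U0 UZ] SU; apply: span_ind => // a v x /SU; apply: UZ. Qed.

Lemma span_mono S S' : (forall x, S x -> S' x) -> forall x, Defs.span S x -> Defs.span S' x.
Proof. by move=> SS'; apply: span_sub => [|x /SS']; [apply: subspace_span | apply: span_mem]. Qed.

End Subspaces.

Section LinearFunctions.
Variables (K : fieldType) (V W : lmodType K) (h : V -> W).
Hypothesis h_lin : linear h.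

Lemma linear_fun0 : h 0 = 0.
Proof.
have := h_lin 1 0 0; rewrite !scale1r addr0.
by move/(congr1 (fun z => z - h 0)); rewrite subrr addrK => /esym.
Qed.

Lemma linear_funD x y : h (x + y) = h x + h y.
Proof. by have := h_lin 1 x y; rewrite !scale1r. Qed.

Lemma linear_funB x y : h (x - y) = h x - h y.
Proof. by have := h_lin (-1) y x; rewrite !scaleN1r [in LHS]addrC => ->; rewrite addrC. Qed.

Lemma subspace_preim (T : W -> Prop) : subspace T -> subspace (fun x => T (h x)).
Proof.
move=> [T0 TZ]; split=> [|a x y Tx Ty]; first by rewrite linear_fun0.
by rewrite h_lin; apply: TZ.
Qed.

Lemma subspace_kernel : subspace (kernel h).
Proof.
split=> [|a x y hx hy]; first exact: linear_fun0.
by rewrite /kernel h_lin hx hy scaler0 addr0.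
Qed.

End LinearFunctions.

Section QuotientLift.
Variables (K : fieldType) (V Q X : lmodType K) (U W : V -> Prop) (pi : V -> Q).
Hypotheses (piQ : quotient_model U W pi) (U_sub : subspace U).

Lemma quotient_lift (h : V -> X) : linear h -> (forall u, U u -> W u -> h u = 0) ->
  exists phi : {linear Q -> X}, forall u, U u -> phi (pi u) = h u.
Proof.
move=> h_lin hW; have [pi_lin pi_onto piW] := piQ.
have h_wd u u' : U u -> U u' -> pi u = pi u' -> h u = h u'.
  move=> Uu Uu' piE; apply/eqP; rewrite -subr_eq0 -linear_funB //; apply/eqP.
  have Ud := subspaceB U_sub Uu Uu'.
  by apply: hW => //; apply/piW => //; rewrite linear_funB // piE subrr.
have rep_ex q : exists u, U u /\ pi u = q by have [u] := pi_onto q; exists u.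
pose rep q := proj1_sig (constructive_indefinite_description _ (rep_ex q)).
have repP q : U (rep q) /\ pi (rep q) = q.
  by rewrite /rep; case: constructive_indefinite_description.
pose phi q := h (rep q).
have phi_lin : linear phi.
  move=> a q q'; rewrite /phi -h_lin.
  have [U1 E1] := repP q; have [U2 E2] := repP q'; have [U3 E3] := repP (a *: q + q').
  by apply: h_wd => //; [apply: U_sub.2 | rewrite pi_lin E1 E2 E3].
exists (HB.pack_for {linear Q -> X} phi (GRing.isLinear.Build _ _ _ _ phi phi_lin)).
move=> u Uu /=.
by have [U1 E1] := repP (pi u); apply: h_wd.
Qed.

End QuotientLift.

Section SubquotientSequence.
Variables (K : fieldType) (V X : lmodType K) (h : V -> X).
Variables (U1 W1 U2 W2 U3 W3 : V -> Prop) (Q1 Q2 Q3 : lmodType K).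
Variables (pi1 : V -> Q1) (pi2 : V -> Q2) (pi3 : V -> Q3).
Hypotheses (piQ1 : quotient_model U1 W1 pi1) (piQ2 : quotient_model U2 W2 pi2)
  (piQ3 : quotient_model U3 W3 pi3) (h_lin : linear h).
Hypotheses (U1_sub : subspace U1) (U2_sub : subspace U2) (U3_sub : subspace U3).
Hypotheses (U12 : forall u, U1 u -> U2 u) (U23 : forall u, U2 u -> U3 u).
Hypotheses (W1E : forall u, U1 u -> W1 u <-> W2 u) (W23 : forall u, W2 u -> W3 u).
Hypotheses (U1W3 : forall u, U1 u -> W3 u)
  (U2W3 : forall u, U2 u -> W3 u -> exists2 v, U1 v & W2 (u - v)).
Hypotheses (W3h : forall u, W3 u -> h u = 0) (U2h : forall u, U2 u -> h u = 0)
  (U3h : forall u, U3 u -> h u = 0 -> U2 u).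

Theorem subquotient_exact_sequence :
  exists (alpha : {linear Q1 -> Q2}) (beta : {linear Q2 -> Q3})
         (gamma : {linear Q3 -> X}),
    [/\ forall u, U1 u -> alpha (pi1 u) = pi2 u,
        forall u, U2 u -> beta (pi2 u) = pi3 u,
        forall u, U3 u -> gamma (pi3 u) = h u
      & [/\ forall q, alpha q = 0 -> q = 0,
            forall q, beta q = 0 <-> exists q', alpha q' = q,
            forall q, gamma q = 0 <-> exists q', beta q' = q
          & forall y, (exists q, gamma q = y) <-> exists2 u, U3 u & h u = y]].
Proof.
have [pi1_lin pi1_onto pi1W] := piQ1.
have [pi2_lin pi2_onto pi2W] := piQ2.
have [pi3_lin pi3_onto pi3W] := piQ3.
have [alpha alphaE] : exists alpha : {linear Q1 -> Q2},
    forall u, U1 u -> alpha (pi1 u) = pi2 u.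
  by apply: (quotient_lift piQ1) => // u U1u /(W1E U1u) /(pi2W _ (U12 U1u)).
have [beta betaE] : exists beta : {linear Q2 -> Q3},
    forall u, U2 u -> beta (pi2 u) = pi3 u.
  by apply: (quotient_lift piQ2) => // u U2u /W23 /(pi3W _ (U23 U2u)).
have [gamma gammaE] : exists gamma : {linear Q3 -> X},
    forall u, U3 u -> gamma (pi3 u) = h u.
  by apply: (quotient_lift piQ3) => // u _ /W3h.
exists alpha, beta, gamma; split=> //; split.
- move=> q; have [u U1u <-] := pi1_onto q; rewrite alphaE //.
  by move=> /(pi2W _ (U12 U1u)) /(W1E U1u) /(pi1W _ U1u).
- move=> q; split=> [|[q' <-]].
    have [u U2u <-] := pi2_onto q; rewrite betaE // => /(pi3W _ (U23 U2u)) W3u.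
    have [v U1v W2uv] := U2W3 U2u W3u; exists (pi1 v); rewrite alphaE //.
    apply/esym/subr0_eq; rewrite -linear_funB //.
    by apply/(pi2W _ (subspaceB U2_sub U2u (U12 U1v))).2.
  have [v U1v <-] := pi1_onto q'.
  rewrite alphaE // betaE; last exact: U12.
  exact/(pi3W v (U23 (U12 U1v))).2/U1W3.
- move=> q; split=> [|[q' <-]].
    have [u U3u <-] := pi3_onto q; rewrite gammaE // => /(U3h U3u) U2u.
    by exists (pi2 u); rewrite betaE.
  have [u U2u <-] := pi2_onto q'.
  by rewrite betaE // gammaE; [apply: U2h | apply: U23].
- move=> y; split=> [[q <-]|[u U3u <-]]; last by exists (pi3 u); rewrite gammaE.
  by have [u U3u <-] := pi3_onto q; exists u => //; rewrite gammaE.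
Qed.
End SubquotientSequence.

Section LowerLieCentralSeries.
Variable K : fieldType.
Implicit Types h : leibniz K.

Lemma lbrDl h (x y z : h) : lbr h (x + y) z = lbr h x z + lbr h y z.
Proof. by have := lbr_linl 1 x y z; rewrite !scale1r. Qed.

Lemma lbrDr h (x y z : h) : lbr h z (x + y) = lbr h z x + lbr h z y.
Proof. by have := lbr_linr 1 x y z; rewrite !scale1r. Qed.

Lemma lie_brC h (A B : h -> Prop) x : lie_br A B x -> lie_br B A x.
Proof.
by apply: span_mono => _ [a [b [Aa [Bb ->]]]]; exists b, a; rewrite addrC.
Qed.

Lemma lie_br_mono h (A B A' B' : h -> Prop) :
  (forall x, A x -> A' x) -> (forall x, B x -> B' x) ->
  forall x, lie_br A B x -> lie_br A' B' x.
Proof.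
by move=> AA' BB'; apply: span_mono => _ [a [b [/AA' ? [/BB' ? ->]]]]; exists a, b.
Qed.

Lemma lowlieS h i : (0 < i)%N -> lowlie h i.+1 = lie_br (lowlie h i) (setAll h).
Proof. by case: i. Qed.

Lemma lowlie_subspace h i : subspace (lowlie h i).
Proof. by case: i => [|[|i]] //=; apply: subspace_span. Qed.

Lemma schur_num_subspace h (r : h -> Prop) : subspace r -> subspace (schur_num r).
Proof. by move=> r_sub; apply: subspaceI r_sub (subspace_span _). Qed.

Lemma lowlie_lie_brTT h i x : (1 < i)%N -> lowlie h i x -> lie_br (setAll h) (setAll h) x.
Proof. by case: i => [|[|i]] // _; apply: lie_br_mono. Qed.

End LowerLieCentralSeries.

Section Presentation.
Variables (K : fieldType) (f g : leibniz K) (p : f -> g).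
Hypothesis p_hom : is_hom p.

Let p_lin : linear p := p_hom.1.

Lemma lie_br_hom (A B : f -> Prop) (A' B' : g -> Prop) :
  (forall a, A a -> A' (p a)) -> (forall b, B b -> B' (p b)) ->
  forall x, lie_br A B x -> lie_br A' B' (p x).
Proof.
move=> AA' BB'; apply: span_sub; first exact: subspace_preim (subspace_span _).
move=> _ [a [b [Aa [Bb ->]]]]; apply: span_mem; exists (p a), (p b).
by rewrite linear_funD // !p_hom.2; split; [apply: AA' | split; [apply: BB'|]].
Qed.

Lemma lowlie_hom i x : lowlie f i x -> lowlie g i (p x).
Proof.
elim: i x => [|i IHi] x //; case: (posnP i) => [-> //|i_gt0].
by rewrite !lowlieS //; apply: lie_br_hom.
Qed.

Hypothesis p_surj : forall y : g, exists x, p x = y.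

Lemma lowlie_lift i z : lowlie g i z -> exists2 x, lowlie f i x & p x = z.
Proof.
elim: i z => [|i IHi] z; first by have [x] := p_surj z; exists x.
case: (posnP i) => [-> _|i_gt0]; first by have [x] := p_surj z; exists x.
rewrite !lowlieS //; move: z; apply: span_ind => [|a _ _ [c [d [gc [_ ->]]]] [x fx <-]].
  by exists 0; [apply: span0 | apply: linear_fun0].
have [c' fc' <-] := IHi c gc; have [d' <-] := p_surj d.
exists (a *: (lbr f c' d' + lbr f d' c') + x); first by apply: span_cons => //; exists c', d'.
by rewrite p_lin linear_funD // !p_hom.2.
Qed.

Variable k : nat.
Hypothesis k_gt0 : (0 < k)%N.
Hypothesis g_nil : forall z, lowlie g k.+1 z -> z = 0.
Local Notation s := (fun x => lowlie g k (p x)).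

Lemma lowlie_sub_kernel x : lowlie f k.+1 x -> p x = 0.
Proof. by move/lowlie_hom; apply: g_nil. Qed.

Lemma kernel_sub_preim x : p x = 0 -> lowlie g k (p x).
Proof. by move->; apply: (lowlie_subspace g k).1. Qed.

Lemma lowlie_sub_schur_num x : lowlie f k.+1 x -> schur_num (kernel p) x.
Proof. by move=> fx; split; [apply: lowlie_sub_kernel | apply: lowlie_lie_brTT fx]. Qed.

Lemma schur_num_kernel_sub_preim x : schur_num (kernel p) x -> schur_num s x.
Proof. by case=> /kernel_sub_preim. Qed.

Lemma lie_br_kernel_sub_preim x : lie_br (setAll f) (kernel p) x -> lie_br (setAll f) s x.
Proof. exact/lie_br_mono/kernel_sub_preim. Qed.

Lemma lowlie_sub_lie_br_preim x : lowlie f k.+1 x -> lie_br (setAll f) s x.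
Proof. by rewrite lowlieS // => /lie_brC; apply: lie_br_mono => // y /lowlie_hom. Qed.

Lemma lie_br_preim_sub_kernel x : lie_br (setAll f) s x -> p x = 0.
Proof.
move=> /(lie_br_hom (A' := setAll g) (B' := lowlie g k)) fs; apply: g_nil.
by rewrite lowlieS //; apply/lie_brC/fs.
Qed.

Lemma lie_br_preim_decomp x : lie_br (setAll f) s x ->
  exists2 y, lowlie f k.+1 y & lie_br (setAll f) (kernel p) (x - y).
Proof.
pose T x := exists2 y, lowlie f k.+1 y & lie_br (setAll f) (kernel p) (x - y).
have T_sub : subspace T.
  split=> [|a x1 x2 [y1 fy1 r1] [y2 fy2 r2]].
    by exists 0; [apply: (lowlie_subspace _ _).1 | rewrite subr0; apply: span0].
  exists (a *: y1 + y2); first exact: (lowlie_subspace _ _).2.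
  by rewrite opprD addrACA -scalerBr; apply: (subspace_span _).2.
move: x; apply: (span_sub T_sub) => _ [a [b [_ [sb ->]]]].
have [c fc pc] := lowlie_lift sb.
have [d rd ->] : exists2 d, p d = 0 & b = c + d.
  by exists (b - c); [rewrite linear_funB // pc subrr | rewrite addrC subrK].
exists (lbr f c a + lbr f a c); first by rewrite lowlieS //; apply: span_mem; exists c, a.
rewrite lbrDr lbrDl addrACA [lbr f c a + _]addrC [X in X - _]addrC addrK.
by apply: span_mem; exists a, d.
Qed.

Lemma lowlie_eq_image_schur_num z : (1 < k)%N ->
  lowlie g k z <-> exists2 x, schur_num s x & p x = z.
Proof.
move=> k_gt1; split=> [/lowlie_lift [x fx <-]|[x [sx _] <-] //].
by exists x => //; split; [apply: lowlie_hom | apply: lowlie_lie_brTT fx].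
Qed.

End Presentation.

Theorem mainTheorem7 (K : fieldType) (two_neq0 : (2%:R : K) != 0)
  (g f : leibniz K) (p : f -> g) (k : nat) (hk : (2 <= k)%N)
  (Hnil : lie_nilpotent_class g k)
  (Hfree : is_free f) (Hp : is_hom p) (Hsurj : forall y : g, exists x, p x = y)
  (Q1 Q2 Q3 : lmodType K) (pi1 : f -> Q1) (pi2 : f -> Q2) (pi3 : f -> Q3)
  (* Q1 = f^{[k+1]} / ([f,r]_Lie cap f^{[k+1]}),  r = ker p *)
  (H1 : quotient_model (lowlie f k.+1)
          (fun x => lie_br (setAll f) (kernel p) x /\ lowlie f k.+1 x) pi1)
  (* Q2 = M^Lie(g), via the presentation f -> g *)
  (H2 : schur_model (kernel p) pi2)
  (* Q3 = M^Lie(g / g^{[k]}), via the presentation f -> g -> g / g^{[k]},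
     whose kernel is the preimage of g^{[k]} *)
  (H3 : schur_model (fun x => lowlie g k (p x)) pi3) :
  exists (alpha : {linear Q1 -> Q2}) (beta : {linear Q2 -> Q3})
         (gamma : {linear Q3 -> lcarrier g}),
    (* the maps are the natural ones *)
    [/\ forall x, lowlie f k.+1 x -> alpha (pi1 x) = pi2 x,
        forall x, schur_num (kernel p) x -> beta (pi2 x) = pi3 x,
        forall x, schur_num (fun y => lowlie g k (p y)) x -> gamma (pi3 x) = p x
    (* and the sequence 0 -> Q1 -> Q2 -> Q3 -> g^{[k]} -> 0 is exact *)
      & [/\ forall u, alpha u = 0 -> u = 0,
            forall v, beta v = 0 <-> exists u, alpha u = v,
            forall w, gamma w = 0 <-> exists v, beta v = w
          & forall z : g, lowlie g k z <-> exists w, gamma w = z]].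
Proof.
have k_gt0 : (0 < k)%N := ltnW hk.
have [g_nil _] := Hnil.
have p_lin : linear p := Hp.1.
have W1E x : lowlie f k.+1 x ->
    lie_br (setAll f) (kernel p) x /\ lowlie f k.+1 x <-> schur_den (kernel p) x.
  by move=> fx; split=> [[]|].
have U3h x : schur_num (fun y => lowlie g k (p y)) x -> p x = 0 -> schur_num (kernel p) x.
  by case.
have [alpha [beta [gamma [? ? ? [? ? ? gamma_im]]]]] :=
  subquotient_exact_sequence H1 H2 H3 p_lin (lowlie_subspace f k.+1)
    (schur_num_subspace (subspace_kernel p_lin))
    (schur_num_subspace (subspace_preim p_lin (lowlie_subspace g k)))
    (lowlie_sub_schur_num Hp k_gt0 g_nil) (schur_num_kernel_sub_preim k) W1E
    (lie_br_kernel_sub_preim k) (lowlie_sub_lie_br_preim Hp k_gt0)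
    (fun x _ fs => lie_br_preim_decomp Hp Hsurj k_gt0 fs)
    (lie_br_preim_sub_kernel Hp k_gt0 g_nil) (fun x => @proj1 _ _) U3h.
exists alpha, beta, gamma; split=> //; split=> // z.
by rewrite (lowlie_eq_image_schur_num Hp Hsurj) // gamma_im.
Qed.
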